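(* Consider the 2-node network dynamical system \[ \dot x_1 = a_1x_1 + w_{12}(x_2-x_1) - w x_2^3 + w(x_1+x_2)^3,\qquad \dot x_2 = a_2x_2 + w_{21}(x_1-x_2) + w x_2^3, \] with $(x_1,x_2)\in\mathbb{R}^2$ and real parameters $a_1,a_2,w_{12},w_{21},w$, where $a_1\neq 0$, $a_2\neq0$, and the parameters satisfy \[ a_1-w_{12}+a_2-w_{21}=0,\qquad a_1a_2-a_1w_{21}-a_2w_{12}=0, \] so that the origin is a nilpotent equilibrium. If $w=0$, then the origin is unstable. On the other hand, if $a_1=-a_2=\alpha$ with $\alpha>0$ and $w<0$, then the origin is locally asymptotically stable.
   Context: An equilibrium $x^*$ of $\dot x=f(x)$ is called nilpotent if all eigenvalues of the Jacobian $\mathrm{D}_xf(x^* )$ are zero. The two displayed algebraic conditions are exactly the conditions that the linearization matrix at the origin has zero trace and zero determinant. *)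

From Stdlib Require Import Reals.
Open Scope R_scope.

Definition norm2 (x : R * R) : R := sqrt (fst x ^ 2 + snd x ^ 2).

Definition solution_on (f : R * R -> R * R) (x0 : R * R) (T : R)
  (phi : R -> R * R) : Prop :=
  phi 0 = x0 /\
  (forall t, 0 <= t < T ->
     continuity_pt (fun s => fst (phi s)) t /\
     continuity_pt (fun s => snd (phi s)) t) /\
  (forall t, 0 < t < T ->
     derivable_pt_lim (fun s => fst (phi s)) t (fst (f (phi t))) /\
     derivable_pt_lim (fun s => snd (phi s)) t (snd (f (phi t)))).

Definition global_solution (f : R * R -> R * R) (x0 : R * R)
  (phi : R -> R * R) : Prop :=
  forall T, 0 < T -> solution_on f x0 T phi.

(* Lyapunov stability of the origin (assumed to be an equilibrium):
   solutions starting delta-close to 0 stay eps-close to 0 as long as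
   they exist. *)
Definition lyapunov_stable (f : R * R -> R * R) : Prop :=
  forall eps, 0 < eps -> exists delta, 0 < delta /\
    forall x0 T phi, norm2 x0 < delta -> solution_on f x0 T phi ->
      forall t, 0 <= t < T -> norm2 (phi t) < eps.

Definition unstable (f : R * R -> R * R) : Prop := ~ lyapunov_stable f.

Definition loc_asymp_stable (f : R * R -> R * R) : Prop :=
  lyapunov_stable f /\
  exists delta, 0 < delta /\
    forall x0 phi, norm2 x0 < delta -> global_solution f x0 phi ->
      forall e, 0 < e -> exists t0, forall t, t0 <= t -> norm2 (phi t) < e.

Definition net_field (a1 a2 w12 w21 w : R) (x : R * R) : R * R :=
  let x1 := fst x in let x2 := snd x in
  (a1 * x1 + w12 * (x2 - x1) - w * x2 ^ 3 + w * (x1 + x2) ^ 3,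
   a2 * x2 + w21 * (x1 - x2) + w * x2 ^ 3).

From Stdlib Require Import Reals Lra Psatz.
From Coquelicot Require Import Coquelicot.
Open Scope R_scope.

(* With w = 0 the field is linear, x' = A x, and the two conditions say tr A = det A = 0, so
   A^2 = 0 by Cayley-Hamilton and t |-> x0 + t A x0 is the solution from x0.  Since w12 <> 0,
   A (0, s) <> 0 and these solutions leave the unit ball however small s is.

   For a1 = - a2 = alpha the conditions force w12 = - w21 = alpha / 2, and in the coordinates
   u = x1 + x2, v = x2 the system is the cascade u' = w u^3, v' = - (alpha / 2) u + w v^3.
   Thus u^2 never increases, and decreases at a definite rate while it stays away from 0.
   Once |u| is small compared with |w| K^3 / alpha, the term w v^3 dominates the coupling
   whenever |v| >= K, so v^2 cannot leave, and eventually enters, [0, K^2].  Both the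
   invariance and the eventual entrance of sublevel sets follow from the mean value theorem. *)

Lemma norm2_lt_iff (x : R * R) (d : R) :
  0 <= d -> norm2 x < d <-> fst x ^ 2 + snd x ^ 2 < d ^ 2.
Proof.
  intros Hd. unfold norm2. rewrite <- (sqrt_pow2 d Hd) at 1.
  split; [apply sqrt_lt_0_alt | intros H; apply sqrt_lt_1_alt; split; [nra | exact H]].
Qed.

Lemma norm2_lt_of_sum_snd (x : R * R) (K : R) :
  0 < K -> (fst x + snd x) ^ 2 <= 2 * K ^ 2 -> snd x ^ 2 <= K ^ 2 -> norm2 x < 3 * K.
Proof.
  intros HK Hsum Hsnd. apply norm2_lt_iff; [lra |].
  (* x1^2 + x2^2 = 2 (x1 + x2)^2 + 3 x2^2 - (x1 + 2 x2)^2 *)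
  pose proof (pow2_ge_0 (fst x + 2 * snd x)). nra.
Qed.

Lemma continuity_pt_sq (f : R -> R) (t : R) :
  continuity_pt f t -> continuity_pt (fun s => f s ^ 2) t.
Proof.
  intros Hf. apply (continuity_pt_ext (f * f)%F); [intros s; unfold mult_fct; ring |].
  exact (continuity_pt_mult _ _ _ Hf Hf).
Qed.

Lemma derivable_pt_lim_sq (f : R -> R) (t l : R) :
  derivable_pt_lim f t l -> derivable_pt_lim (fun s => f s ^ 2) t (2 * f t * l).
Proof.
  intros Hf. apply is_derive_Reals in Hf. apply is_derive_Reals.
  replace (2 * f t * l) with (INR 2 * l * f t ^ Nat.pred 2) by (simpl; ring).
  exact (is_derive_pow f 2 t l Hf).
Qed.

Definition derivative_on (g dg : R -> R) (a b : R) : Prop :=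
  (forall t, a <= t < b -> continuity_pt g t) /\
  (forall t, a < t < b -> derivable_pt_lim g t (dg t)).

Lemma derivative_on_sub (g dg : R -> R) (a b a' b' : R) :
  derivative_on g dg a b -> a <= a' -> b' <= b -> derivative_on g dg a' b'.
Proof.
  intros [Hc Hd] Ha Hb. split; intros t Ht; [apply Hc | apply Hd]; lra.
Qed.

Lemma MVT_upper_bound (g dg : R -> R) (a b D : R) : a < b ->
  (forall x, a <= x <= b -> continuity_pt g x) ->
  (forall x, a < x < b -> derivable_pt_lim g x (dg x)) ->
  (forall x, a < x < b -> dg x <= D) ->
  g b - g a <= D * (b - a).
Proof.
  intros Hab Hc Hd Hdg.
  (* MVT_gen may return an endpoint, where dg is not controlled; capping dg at D is harmless *)
  destruct (MVT_gen g a b (fun x => Rmin (dg x) D)) as (c & _ & E); cbv zeta in *;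
    rewrite ?Rmin_left, ?Rmax_right in * by lra.
  - intros x Hx. apply is_derive_Reals. rewrite Rmin_left by (apply Hdg; lra). auto.
  - exact Hc.
  - rewrite E. apply Rmult_le_compat_r; [lra | apply Rmin_r].
Qed.

Lemma continuity_pt_gt_near (g : R -> R) (s M : R) :
  continuity_pt g s -> M < g s ->
  exists d, 0 < d /\ forall x, Rabs (x - s) < d -> M < g x.
Proof.
  intros Hc Hs.
  destruct (Hc (g s - M)) as (d & Hd & Hnear); [lra |].
  exists d. split; [exact Hd |]. intros x Hx.
  destruct (Req_dec x s) as [-> | Hxs]; [exact Hs |].
  assert (Hdist : Rabs (g x - g s) < g s - M)
    by (apply Hnear; split; [split; [exact I | auto] | exact Hx]).
  apply Rabs_def2 in Hdist. lra.
Qed.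

Lemma last_sublevel_point (g : R -> R) (a t M : R) : a <= t ->
  (forall x, a <= x <= t -> continuity_pt g x) -> g a <= M -> M < g t ->
  exists s, a <= s < t /\ g s <= M /\ forall x, s < x <= t -> M < g x.
Proof.
  intros Hat Hc Ha Ht.
  set (E := fun x => a <= x <= t /\ g x <= M).
  destruct (completeness E) as (s & Hub & Hlub).
  { exists t. intros x Hx. apply Hx. }
  { exists a. split; [lra | exact Ha]. }
  assert (Has : a <= s) by (apply Hub; split; [lra | exact Ha]).
  assert (Hst : s <= t) by (apply Hlub; intros x Hx; apply Hx).
  assert (Hgs : g s <= M).
  { apply Rnot_lt_le; intro Hgs.
    destruct (continuity_pt_gt_near g s M (Hc s (conj Has Hst)) Hgs) as (d & Hd & Hnear).
    (* no point of E lies within d of s, so s - d is a smaller upper bound *)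
    assert (Hsd : s <= s - d); [| lra].
    apply Hlub. intros x [Hx Hgx]. apply Rnot_lt_le; intro Hxd.
    assert (x <= s) by (apply Hub; split; assumption).
    assert (M < g x) by (apply Hnear; apply Rabs_def1; lra). lra. }
  exists s. split; [split; [exact Has |] | split; [exact Hgs |]].
  - destruct Hst as [Hst | ->]; [exact Hst | lra].
  - intros x Hx. apply Rnot_le_lt; intro Hgx.
    assert (x <= s) by (apply Hub; split; [lra | exact Hgx]). lra.
Qed.

Lemma sublevel_invariant (g dg : R -> R) (a b M : R) :
  derivative_on g dg a b -> (forall t, a < t < b -> M < g t -> dg t <= 0) ->
  g a <= M -> forall t, a <= t < b -> g t <= M.
Proof.
  intros [Hc Hd] Hdg Ha t Ht. apply Rnot_lt_le; intro Hgt.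
  destruct (last_sublevel_point g a t M) as (s & Hs & Hgs & Habove);
    [lra | intros x Hx; apply Hc; lra | exact Ha | exact Hgt |].
  assert (g t - g s <= 0 * (t - s)); [| lra].
  apply (MVT_upper_bound g dg); [lra | intros x Hx; apply Hc; lra | intros x Hx; apply Hd; lra |].
  intros x Hx. apply Hdg; [lra | apply Habove; lra].
Qed.

Lemma sublevel_reached (g dg : R -> R) (a L m : R) : 0 < m ->
  (forall b, a < b -> derivative_on g dg a b) ->
  (forall t, a < t -> L <= g t -> dg t <= - m) ->
  exists t1, a <= t1 /\ g t1 <= L.
Proof.
  intros Hm Hder Hdg.
  destruct (Rle_lt_dec (g a) L) as [Ha | Ha]; [now exists a; split; [apply Rle_refl |] |].
  (* decreasing at rate m, g would drop below L before time t *)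
  set (t := a + (g a - L) / m + 1).
  assert (Hgap : 0 <= (g a - L) / m) by (apply Rdiv_le_0_compat; lra).
  destruct (Hder (t + 1)) as [Hc Hd]; [unfold t; lra |].
  destruct (continuity_ab_min g a t) as (tmin & Hmin & Htmin);
    [unfold t; lra | intros x Hx; apply Hc; lra |].
  destruct (Rle_lt_dec (g tmin) L) as [Hle | Hgt]; [now exists tmin; split; [apply Htmin |] |].
  exfalso.
  assert (Hdrop : g t - g a <= - m * (t - a)).
  { apply (MVT_upper_bound g dg); [unfold t; lra | intros x Hx; apply Hc; lra
    | intros x Hx; apply Hd; lra |].
    intros x Hx. apply Hdg; [lra |]. pose proof (Hmin x ltac:(lra)). lra. }
  assert (m * (t - a) = g a - L + m) by (unfold t; field; lra).
  pose proof (Hmin t ltac:(unfold t; lra)). lra.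
Qed.

Lemma eventually_sublevel (g dg : R -> R) (a L m : R) : 0 < m ->
  (forall b, a < b -> derivative_on g dg a b) ->
  (forall t, a < t -> L <= g t -> dg t <= - m) ->
  exists t1, a <= t1 /\ forall t, t1 <= t -> g t <= L.
Proof.
  intros Hm Hder Hdg.
  destruct (sublevel_reached g dg a L m Hm Hder Hdg) as (t1 & Ht1 & Hg1).
  exists t1. split; [exact Ht1 |]. intros t Ht.
  apply (sublevel_invariant g dg t1 (t + 1) L); [| | exact Hg1 | lra].
  - apply (derivative_on_sub g dg a (t + 1)); [apply Hder | |]; lra.
  - intros s Hs Hgs. assert (dg s <= - m) by (apply Hdg; lra). lra.
Qed.

Definition ray (f : R * R -> R * R) (x0 : R * R) (t : R) : R * R :=
  (fst x0 + t * fst (f x0), snd x0 + t * snd (f x0)).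

Lemma ray_solution (f : R * R -> R * R) (x0 : R * R) (T : R) :
  (forall t, f (ray f x0 t) = f x0) -> solution_on f x0 T (ray f x0).
Proof.
  intros Hconst.
  assert (Hd : forall t, derivable_pt_lim (fun s => fst (ray f x0 s)) t (fst (f x0)) /\
                         derivable_pt_lim (fun s => snd (ray f x0 s)) t (snd (f x0))).
  { intros t. split; apply is_derive_Reals; unfold ray; simpl;
      auto_derive; [exact I | ring | exact I | ring]. }
  split; [| split].
  - destruct x0 as [x1 x2]. unfold ray. simpl. f_equal; ring.
  - intros t _. split; apply derivable_continuous_pt; eexists; apply Hd.
  - intros t _. rewrite Hconst. apply Hd.
Qed.

Lemma net_field_linear_ray (a1 a2 w12 w21 : R) (x : R * R) (t : R) :
  a1 - w12 + a2 - w21 = 0 -> a1 * a2 - a1 * w21 - a2 * w12 = 0 ->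
  let f := net_field a1 a2 w12 w21 0 in f (ray f x t) = f x.
Proof.
  intros Htr Hdet f. destruct x as [x1 x2].
  set (tr := a1 - w12 + a2 - w21) in Htr.
  set (det := a1 * a2 - a1 * w21 - a2 * w12) in Hdet.
  (* f is linear with matrix A, so f (x + t A x) = f x + t A^2 x,
     and A^2 = tr A - det I by Cayley-Hamilton *)
  transitivity (fst (f (x1, x2)) + t * (((a1 - w12) * tr - det) * x1 + w12 * tr * x2),
                snd (f (x1, x2)) + t * (w21 * tr * x1 + ((a2 - w21) * tr - det) * x2)).
  - unfold f, ray, net_field, tr, det. simpl. f_equal; ring.
  - rewrite Htr, Hdet. unfold f, net_field. simpl. f_equal; ring.
Qed.

Lemma net_field_unstable (a1 a2 w12 w21 : R) : a1 <> 0 ->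
  a1 - w12 + a2 - w21 = 0 -> a1 * a2 - a1 * w21 - a2 * w12 = 0 ->
  unstable (net_field a1 a2 w12 w21 0).
Proof.
  intros Ha1 Htr Hdet Hstable.
  set (f := net_field a1 a2 w12 w21 0).
  (* w12 = 0 would force det = - a1 ^ 2 *)
  assert (Hw12 : w12 <> 0) by (intros ->; apply Ha1; nra).
  destruct (Hstable 1) as (d & Hd & Hsmall); [lra |].
  set (s := d / 2).
  set (v := s * w12).
  assert (Hv : v <> 0) by (apply Rmult_integral_contrapositive; split; [unfold s |]; lra).
  set (t := 1 + / v ^ 2).
  assert (Ht : 0 < t) by (pose proof (Rinv_0_lt_compat _ (pow2_gt_0 v Hv)); unfold t; lra).
  assert (Hsol : solution_on f (0, s) (t + 1) (ray f (0, s)))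
    by (apply ray_solution; intros; apply net_field_linear_ray; assumption).
  assert (Hnorm : norm2 (ray f (0, s) t) < 1).
  { apply (Hsmall (0, s) (t + 1)); [| exact Hsol | lra].
    apply norm2_lt_iff; [lra |]. simpl. unfold s. nra. }
  apply norm2_lt_iff in Hnorm; [| lra].
  assert (Hfst : fst (ray f (0, s) t) ^ 2 = v ^ 2 + 2 + / v ^ 2)
    by (unfold ray, f, net_field, t, v; simpl; field; split; [exact Hw12 | unfold s; lra]).
  pose proof (pow2_ge_0 v). pose proof (Rinv_0_lt_compat _ (pow2_gt_0 v Hv)).
  pose proof (pow2_ge_0 (snd (ray f (0, s) t))). lra.
Qed.

Section Cascade.

Variables alpha w : R.

Let F := net_field alpha (- alpha) (alpha / 2) (- alpha / 2) w.

Definition sum_sq (phi : R -> R * R) (t : R) : R := (fst (phi t) + snd (phi t)) ^ 2.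
Definition snd_sq (phi : R -> R * R) (t : R) : R := snd (phi t) ^ 2.
Definition snd_sq_deriv (phi : R -> R * R) (t : R) : R :=
  - alpha * (fst (phi t) + snd (phi t)) * snd (phi t) + 2 * w * snd (phi t) ^ 4.

Lemma solution_sum_sq (x0 : R * R) (T : R) (phi : R -> R * R) : solution_on F x0 T phi ->
  derivative_on (sum_sq phi) (fun t => 2 * w * sum_sq phi t ^ 2) 0 T.
Proof.
  intros (_ & Hc & Hd). split.
  - intros t Ht. destruct (Hc t Ht) as [H1 H2].
    exact (continuity_pt_sq _ _ (continuity_pt_plus _ _ _ H1 H2)).
  - intros t Ht. destruct (Hd t Ht) as [H1 H2].
    replace (2 * w * sum_sq phi t ^ 2)
      with (2 * (fst (phi t) + snd (phi t)) * (fst (F (phi t)) + snd (F (phi t))))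
      by (unfold sum_sq, F, net_field; simpl; field).
    exact (derivable_pt_lim_sq _ _ _ (derivable_pt_lim_plus _ _ _ _ _ H1 H2)).
Qed.

Lemma solution_snd_sq (x0 : R * R) (T : R) (phi : R -> R * R) : solution_on F x0 T phi ->
  derivative_on (snd_sq phi) (snd_sq_deriv phi) 0 T.
Proof.
  intros (_ & Hc & Hd). split.
  - intros t Ht. exact (continuity_pt_sq _ _ (proj2 (Hc t Ht))).
  - intros t Ht.
    replace (snd_sq_deriv phi t) with (2 * snd (phi t) * snd (F (phi t)))
      by (unfold snd_sq_deriv, F, net_field; simpl; field).
    exact (derivable_pt_lim_sq _ _ _ (proj2 (Hd t Ht))).
Qed.

Lemma cascade_rate_le (U V K : R) : w <= 0 -> 0 < K ->
  alpha ^ 2 * U ^ 2 <= w ^ 2 * K ^ 6 -> K ^ 2 <= V ^ 2 ->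
  - alpha * U * V + 2 * w * V ^ 4 <= w * K ^ 4.
Proof.
  intros Hw HK HU HV.
  assert (HV4 : K ^ 4 <= V ^ 4) by (replace 4%nat with (2 * 2)%nat by reflexivity;
    rewrite !pow_mult; apply pow_incr; split; [nra | exact HV]).
  assert (HV6 : K ^ 6 <= V ^ 6) by (replace 6%nat with (2 * 3)%nat by reflexivity;
    rewrite !pow_mult; apply pow_incr; split; [nra | exact HV]).
  (* (alpha U V)^2 <= (w V^4)^2, so the coupling term is dominated by -w V^4 *)
  assert (Hcoupling : Rabs (alpha * U * V) <= Rabs (w * V ^ 4)).
  { apply Rsqr_le_abs_0. unfold Rsqr.
    assert (0 <= V ^ 2) by apply pow2_ge_0.
    assert (alpha ^ 2 * U ^ 2 * V ^ 2 <= w ^ 2 * K ^ 6 * V ^ 2)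
      by (apply Rmult_le_compat_r; assumption).
    assert (w ^ 2 * K ^ 6 <= w ^ 2 * V ^ 6)
      by (apply Rmult_le_compat_l; [apply pow2_ge_0 | exact HV6]).
    nra. }
  rewrite (Rabs_left1 (w * V ^ 4)) in Hcoupling by nra.
  pose proof (Rle_abs (- (alpha * U * V))) as Hneg. rewrite Rabs_Ropp in Hneg.
  nra.
Qed.

Hypothesis alpha_pos : 0 < alpha.
Hypothesis w_neg : w < 0.

(* chosen so that u^2 <= 2 radius^2 gives alpha |u| <= - w K^3 *)
Definition radius (K : R) : R := Rmin K (- w * K ^ 3 / (2 * alpha)).

Lemma radius_pos (K : R) : 0 < K -> 0 < radius K.
Proof.
  intros HK. apply Rmin_pos; [exact HK |].
  apply Rdiv_lt_0_compat; [| lra]. pose proof (pow_lt K 3 HK). nra.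
Qed.

Lemma radius_le (K : R) : radius K <= K.
Proof. apply Rmin_l. Qed.

Lemma snd_sq_deriv_le (phi : R -> R * R) (t K : R) : 0 < K ->
  sum_sq phi t <= 2 * radius K ^ 2 -> K ^ 2 <= snd_sq phi t -> snd_sq_deriv phi t <= w * K ^ 4.
Proof.
  intros HK Hsum Hsnd. apply cascade_rate_le; [lra | exact HK | | exact Hsnd].
  assert (Hr : 2 * alpha * radius K <= - w * K ^ 3).
  { assert (radius K <= - w * K ^ 3 / (2 * alpha)) by apply Rmin_r.
    replace (- w * K ^ 3) with (2 * alpha * (- w * K ^ 3 / (2 * alpha))) by (field; lra).
    apply Rmult_le_compat_l; lra. }
  pose proof (radius_pos K HK). unfold sum_sq in Hsum.
  assert ((2 * alpha * radius K) ^ 2 <= (- w * K ^ 3) ^ 2) by (apply pow_incr; nra).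
  assert (alpha ^ 2 * (fst (phi t) + snd (phi t)) ^ 2 <= alpha ^ 2 * (2 * radius K ^ 2))
    by (apply Rmult_le_compat_l; [apply pow2_ge_0 | exact Hsum]).
  nra.
Qed.

Lemma cascade_stable : lyapunov_stable F.
Proof.
  intros eps Heps.
  set (K := eps / 3). assert (HK : 0 < K) by (unfold K; lra).
  pose proof (radius_pos K HK) as Hr. pose proof (radius_le K) as HrK.
  exists (radius K). split; [exact Hr |].
  intros x0 T phi Hx0 Hsol t Ht.
  apply norm2_lt_iff in Hx0; [| lra].
  assert (Hphi0 : phi 0 = x0) by apply Hsol.
  assert (Hsum : forall s, 0 <= s < T -> sum_sq phi s <= 2 * radius K ^ 2).
  { apply (sublevel_invariant _ _ _ _ _ (solution_sum_sq _ _ _ Hsol)).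
    - intros s _ _. pose proof (pow2_ge_0 (sum_sq phi s)). nra.
    - unfold sum_sq. rewrite Hphi0. pose proof (pow2_ge_0 (fst x0 - snd x0)). nra. }
  assert (Hsnd : forall s, 0 <= s < T -> snd_sq phi s <= K ^ 2).
  { apply (sublevel_invariant _ _ _ _ _ (solution_snd_sq _ _ _ Hsol)).
    - intros s Hs Hgt.
      pose proof (snd_sq_deriv_le phi s K HK (Hsum s ltac:(lra)) ltac:(lra)).
      pose proof (pow_lt K 4 HK). nra.
    - unfold snd_sq. rewrite Hphi0. pose proof (pow2_ge_0 (fst x0)). nra. }
  replace eps with (3 * K) by (unfold K; field).
  apply norm2_lt_of_sum_snd; [exact HK | | apply Hsnd, Ht].
  specialize (Hsum t Ht). unfold sum_sq in Hsum. nra.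
Qed.

Lemma cascade_attractive (x0 : R * R) (phi : R -> R * R) : global_solution F x0 phi ->
  forall e, 0 < e -> exists t0, forall t, t0 <= t -> norm2 (phi t) < e.
Proof.
  intros Hglobal e He.
  set (K := e / 3). assert (HK : 0 < K) by (unfold K; lra).
  pose proof (radius_pos K HK) as Hr. pose proof (radius_le K) as HrK.
  set (L := 2 * radius K ^ 2).
  assert (HL : 0 < L) by (unfold L; pose proof (pow_lt _ 2 Hr); lra).
  destruct (eventually_sublevel (sum_sq phi) (fun t => 2 * w * sum_sq phi t ^ 2)
              0 L (- 2 * w * L ^ 2)) as (t1 & Ht1 & Hsum).
  - pose proof (pow_lt L 2 HL). nra.
  - intros b Hb. exact (solution_sum_sq _ _ _ (Hglobal b Hb)).
  - intros s _ Hs. assert (L ^ 2 <= sum_sq phi s ^ 2) by (apply pow_incr; lra). nra.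
  - destruct (eventually_sublevel (snd_sq phi) (snd_sq_deriv phi) t1 (K ^ 2) (- w * K ^ 4))
      as (t2 & Ht2 & Hsnd).
    + pose proof (pow_lt K 4 HK). nra.
    + intros b Hb. apply (derivative_on_sub _ _ 0 b); [| lra | lra].
      exact (solution_snd_sq _ _ _ (Hglobal b ltac:(lra))).
    + intros s Hs Hgt. replace (- (- w * K ^ 4)) with (w * K ^ 4) by ring.
      apply snd_sq_deriv_le; [exact HK | apply Hsum; lra | exact Hgt].
    + exists t2. intros t Ht.
      replace e with (3 * K) by (unfold K; field).
      apply norm2_lt_of_sum_snd; [exact HK | | apply Hsnd, Ht].
      specialize (Hsum t ltac:(lra)). unfold sum_sq, L in Hsum.
      assert (radius K ^ 2 <= K ^ 2) by (apply pow_incr; lra). lra.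
Qed.

End Cascade.

Theorem proposition1 (a1 a2 w12 w21 w : R) :
  a1 <> 0 -> a2 <> 0 ->
  a1 - w12 + a2 - w21 = 0 ->
  a1 * a2 - a1 * w21 - a2 * w12 = 0 ->
  (w = 0 -> unstable (net_field a1 a2 w12 w21 w)) /\
  (forall alpha : R, a1 = alpha -> a2 = - alpha -> 0 < alpha -> w < 0 ->
     loc_asymp_stable (net_field a1 a2 w12 w21 w)).
Proof.
  intros Ha1 _ Htr Hdet. split.
  - intros ->. exact (net_field_unstable a1 a2 w12 w21 Ha1 Htr Hdet).
  - intros alpha -> -> Ha Hw.
    assert (Hw12 : w12 = alpha / 2) by nra.
    assert (Hw21 : w21 = - alpha / 2) by lra.
    subst w12 w21. split.
    + exact (cascade_stable alpha w Ha Hw).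
    + exists 1. split; [lra |]. intros x0 phi _. exact (cascade_attractive alpha w Ha Hw x0 phi).
Qed.
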